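(* Let $f\colon[0,\infty)\to\mathbb{R}$ be continuous and suppose there are $c\in\mathbb R$, $\epsilon>0$ with $f(\zeta)-c/\zeta=O(\zeta^{-1-\epsilon})$ as $\zeta\to\infty$, and let $F(z)=\int_0^\infty f(\zeta)\zeta^{-z}\,d\zeta$ (absolutely convergent for $0<\operatorname{Re} z<1$). Fix an integer $N\ge1$ and $z\in\mathbb C$ with $0<\operatorname{Re}z<1/N$. For $s>0$ define complex numbers $\phi_s(w)$ for all rooted forests $w$ with $|w|\le N$ recursively by $\phi_s(\mathbb 1)=1$, $\phi_s(w w')=\phi_s(w)\phi_s(w')$, and $$\phi_s(B_+(w))=\int_0^\infty f(\zeta)\,(s\zeta)^{-z}\,\phi_{s\zeta}(w)\,d\zeta .$$ Then all these integrals converge and for every forest $w$ with $|w|\le N$ and every $s>0$, $$\phi_s(w)=s^{-z|w|}\prod_{v\in V(w)}F\big(z\,|w_v|\big).$$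
   Context: Rooted forests, $|w|$ (number of nodes), $V(w)$ (set of nodes), $\mathbb 1$ (empty forest), product of forests = disjoint union, $B_+$ (grafting all trees of a forest onto a new root), and $w_v$ (the subtree of $w$ rooted at node $v$, consisting of $v$ and its descendants) are as in the Connes–Kreimer Hopf algebra of rooted trees. *)

From Stdlib Require Import Reals Lra Lia List ClassicalEpsilon.
Open Scope R_scope.

Definition Cx : Type := (R * R)%type.
Definition RtoCx (r : R) : Cx := (r, 0).
Definition Cx1 : Cx := (1, 0).
Definition Cx0 : Cx := (0, 0).
Definition Cxmul (u v : Cx) : Cx :=
  (fst u * fst v - snd u * snd v, fst u * snd v + snd u * fst v).
Definition Cxscale (k : R) (u : Cx) : Cx := (k * fst u, k * snd u).

(* t^(-z) = exp(-z ln t) for t > 0 and complex z *)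
Definition cpow_neg (t : R) (z : Cx) : Cx :=
  (exp (- fst z * ln t) * cos (snd z * ln t),
   - (exp (- fst z * ln t) * sin (snd z * ln t))).

Definition improper_int_0_inf (g : R -> R) (l : R) : Prop :=
  (forall a b, 0 < a -> a <= b -> inhabited (Riemann_integrable g a b)) /\
  forall eps, 0 < eps -> exists d M, 0 < d /\ 0 < M /\
    forall a b (pr : Riemann_integrable g a b),
      0 < a -> a < d -> M < b -> Rabs (RiemannInt pr - l) < eps.

Definition cint (g : R -> Cx) (L : Cx) : Prop :=
  improper_int_0_inf (fun x => fst (g x)) (fst L) /\
  improper_int_0_inf (fun x => snd (g x)) (snd L).

(* the value of the (convergent) integral; 0 if it does not converge *)
Definition cint_val (g : R -> Cx) : Cx :=
  match excluded_middle_informative (exists L, cint g L) with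
  | left H => proj1_sig (constructive_indefinite_description _ H)
  | right _ => Cx0
  end.

Inductive tree : Type := Node : list tree -> tree.
(* a forest is a list of trees (product = concatenation, 1 = nil);
   B_+ w = Node w *)
Definition forest := list tree.

Fixpoint tsize (t : tree) : nat :=
  match t with
  | Node ws => S ((fix fs (l : list tree) : nat :=
                    match l with nil => O | u :: l' => (tsize u + fs l')%nat end) ws)
  end.
Definition fsize (w : forest) : nat := fold_right (fun t n => (tsize t + n)%nat) O w.

(* product over all nodes v of t of g(|t_v|) *)
Fixpoint tnodeprod (g : nat -> Cx) (t : tree) : Cx :=
  match t with
  | Node ws => Cxmul (g (tsize t))
      ((fix fp (l : list tree) : Cx :=
          match l with nil => Cx1 | u :: l' => Cxmul (tnodeprod g u) (fp l') end) ws)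
  end.
Definition fnodeprod (g : nat -> Cx) (w : forest) : Cx :=
  fold_right (fun t acc => Cxmul (tnodeprod g t) acc) Cx1 w.

Fixpoint phi_tree (f : R -> R) (z : Cx) (t : tree) (s : R) : Cx :=
  match t with
  | Node ws =>
      cint_val (fun zeta =>
        Cxmul (Cxmul (RtoCx (f zeta)) (cpow_neg (s * zeta) z))
          ((fix pf (l : list tree) (s' : R) : Cx :=
              match l with
              | nil => Cx1
              | u :: l' => Cxmul (phi_tree f z u s') (pf l' s')
              end) ws (s * zeta)))
  end.

Definition phi_forest (f : R -> R) (z : Cx) (w : forest) (s : R) : Cx :=
  fold_right (fun t acc => Cxmul (phi_tree f z t s) acc) Cx1 w.

Definition phi_integrand (f : R -> R) (z : Cx) (w : forest) (s : R) (zeta : R) : Cx :=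
  Cxmul (Cxmul (RtoCx (f zeta)) (cpow_neg (s * zeta) z)) (phi_forest f z w (s * zeta)).

Definition Ftrans (f : R -> R) (z' : Cx) : Cx :=
  cint_val (fun zeta => Cxmul (RtoCx (f zeta)) (cpow_neg zeta z')).

From Stdlib Require Import Reals List Lra Lia FunctionalExtensionality ClassicalEpsilon.
From Coquelicot Require Import Coquelicot.
Open Scope R_scope.

(* Put F_n := F(n z), where F is the Mellin-type transform of f.  The identity
     phi_s(w) = s^{-z|w|} * prod_{v in V(w)} F_{|w_v|}
   is proved by induction on the size of trees.  If it holds for a forest w,
   the integrand defining phi_s(B_+ w) is, for zeta > 0, the constant
   s^{-z(|w|+1)} * prod_{v in V(w)} F_{|w_v|} times f(zeta) zeta^{-(|w|+1) z},
   whose integral is F_{|w|+1}; hence that integral converges and the identity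
   holds for B_+ w.  Multiplicativity of phi_s then passes from trees to forests.

   The analytic input is the convergence of F_m for 1 <= m <= N, i.e. of the
   Mellin integral for 0 < Re(m z) < 1.  It follows from a general criterion
   (a continuous g on (0,oo) with |g x| <= C x^{-a} on (0,1] and
   |g x| <= C x^{-1-a} on [1,oo), 0 < a < 1, is improperly integrable) and from
   the bounds |f x| <= B on (0,1], |f x| <= C/x on [1,oo), which come from the
   continuity and the asymptotics of f. *)

(* The improper integral [improper_int_0_inf g l], restated with Coquelicot's
   total [RInt]; asking d <= M ensures that every admissible pair has a <= b. *)
Definition impr (g : R -> R) (l : R) : Prop :=
  (forall a b, 0 < a -> a <= b -> ex_RInt g a b) /\
  forall eps, 0 < eps -> exists d M, 0 < d /\ d <= M /\
     forall a b, 0 < a -> a < d -> M < b -> Rabs (RInt g a b - l) < eps.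

Lemma impr_iff (g : R -> R) (l : R) : impr g l <-> improper_int_0_inf g l.
Proof.
 split; intros [Hex Hlim]; split.
 - intros a b Ha Hab; constructor; apply ex_RInt_Reals_0; auto.
 - intros eps He; destruct (Hlim eps He) as (d & M & Hd & HdM & H).
   exists d, M; split; [lra|split; [lra|]].
   intros a b pr Ha Had HMb; rewrite <- RInt_Reals; apply H; auto.
 - intros a b Ha Hab; destruct (Hex a b Ha Hab) as [pr].
   apply ex_RInt_Reals_1; exact pr.
 - intros eps He; destruct (Hlim eps He) as (d & M & Hd & HM & H).
   exists (Rmin d M), M; split; [apply Rmin_glb_lt; lra|split; [apply Rmin_r|]].
   intros a b Ha Had HMb.
   pose proof (Rmin_l d M); pose proof (Rmin_r d M).
   destruct (Hex a b Ha ltac:(lra)) as [pr].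
   rewrite (RInt_Reals _ _ _ pr); apply H; lra.
Qed.

Lemma impr_unique (g : R -> R) (l1 l2 : R) : impr g l1 -> impr g l2 -> l1 = l2.
Proof.
 intros [_ H1] [_ H2].
 destruct (Req_dec l1 l2) as [|Hn]; auto; exfalso.
 assert (He : 0 < Rabs (l1 - l2) / 2).
 { assert (l1 - l2 <> 0) by lra. pose proof (Rabs_pos_lt _ H); lra. }
 destruct (H1 _ He) as (d1 & M1 & Hd1 & _ & K1).
 destruct (H2 _ He) as (d2 & M2 & Hd2 & _ & K2).
 set (a := Rmin d1 d2 / 2); set (b := Rmax M1 M2 + 1).
 assert (0 < Rmin d1 d2) by (apply Rmin_glb_lt; auto).
 pose proof (Rmin_l d1 d2); pose proof (Rmin_r d1 d2).
 pose proof (Rmax_l M1 M2); pose proof (Rmax_r M1 M2).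
 specialize (K1 a b ltac:(unfold a; lra) ltac:(unfold a; lra) ltac:(unfold b; lra)).
 specialize (K2 a b ltac:(unfold a; lra) ltac:(unfold a; lra) ltac:(unfold b; lra)).
 revert K1 K2; generalize (RInt g a b); intros I K1 K2.
 clear -K1 K2; split_Rabs; lra.
Qed.

Lemma impr_ext (g h : R -> R) (l : R) :
  (forall x, 0 < x -> g x = h x) -> impr g l -> impr h l.
Proof.
 intros E [Hex Hlim].
 assert (Eab : forall a b, 0 < a -> a <= b -> forall x, Rmin a b < x < Rmax a b -> g x = h x).
 { intros a b Ha Hab x Hx; apply E; rewrite Rmin_left in Hx; lra. }
 split.
 - intros a b Ha Hab; apply (ex_RInt_ext g); [apply Eab | apply Hex]; auto.
 - intros eps He; destruct (Hlim eps He) as (d & M & Hd & HdM & H).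
   exists d, M; repeat split; auto; intros a b Ha Had HMb.
   rewrite <- (RInt_ext g); [apply H; auto | apply Eab; lra].
Qed.

Lemma impr_lin (g1 g2 : R -> R) (l1 l2 k1 k2 : R) : impr g1 l1 -> impr g2 l2 ->
  impr (fun x => k1 * g1 x + k2 * g2 x) (k1 * l1 + k2 * l2).
Proof.
 intros [A1 B1] [A2 B2].
 assert (EX : forall a b, 0 < a -> a <= b -> ex_RInt (fun x => k1 * g1 x + k2 * g2 x) a b).
 { intros a b Ha Hab.
   apply (ex_RInt_plus (V := R_NormedModule) (fun x => scal k1 (g1 x)) (fun x => scal k2 (g2 x))).
   - apply (ex_RInt_scal (V := R_NormedModule) g1); apply A1; auto.
   - apply (ex_RInt_scal (V := R_NormedModule) g2); apply A2; auto. }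
 assert (Rlin : forall a b, 0 < a -> a <= b ->
   RInt (fun x => k1 * g1 x + k2 * g2 x) a b = k1 * RInt g1 a b + k2 * RInt g2 a b).
 { intros a b Ha Hab.
   rewrite (RInt_plus (V := R_CompleteNormedModule) (fun x => scal k1 (g1 x)) (fun x => scal k2 (g2 x))).
   2: apply (ex_RInt_scal (V := R_NormedModule) g1); apply A1; auto.
   2: apply (ex_RInt_scal (V := R_NormedModule) g2); apply A2; auto.
   rewrite (RInt_scal (V := R_CompleteNormedModule) g1) by (apply A1; auto).
   rewrite (RInt_scal (V := R_CompleteNormedModule) g2) by (apply A2; auto).
   reflexivity. }
 split; [exact EX|].
 intros eps He.
 set (k := Rabs k1 + Rabs k2 + 1).
 assert (Hk : 0 < k) by (unfold k; pose proof (Rabs_pos k1); pose proof (Rabs_pos k2); lra).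
 destruct (B1 (eps / k) ltac:(apply Rdiv_lt_0_compat; lra)) as (d1 & M1 & Hd1 & HdM1 & K1).
 destruct (B2 (eps / k) ltac:(apply Rdiv_lt_0_compat; lra)) as (d2 & M2 & Hd2 & HdM2 & K2).
 pose proof (Rmin_l d1 d2); pose proof (Rmin_r d1 d2).
 pose proof (Rmax_l M1 M2); pose proof (Rmax_r M1 M2).
 exists (Rmin d1 d2), (Rmax M1 M2).
 split; [apply Rmin_glb_lt; auto|split; [lra|]].
 intros a b Ha Had HMb.
 rewrite Rlin by lra.
 specialize (K1 a b Ha ltac:(lra) ltac:(lra)); specialize (K2 a b Ha ltac:(lra) ltac:(lra)).
 replace (k1 * RInt g1 a b + k2 * RInt g2 a b - (k1 * l1 + k2 * l2)) with
   (k1 * (RInt g1 a b - l1) + k2 * (RInt g2 a b - l2)) by ring.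
 eapply Rle_lt_trans; [apply Rabs_triang|]; rewrite !Rabs_mult.
 assert (X1 : Rabs k1 * Rabs (RInt g1 a b - l1) <= Rabs k1 * (eps / k))
   by (apply Rmult_le_compat_l; [apply Rabs_pos|lra]).
 assert (X2 : Rabs k2 * Rabs (RInt g2 a b - l2) <= Rabs k2 * (eps / k))
   by (apply Rmult_le_compat_l; [apply Rabs_pos|lra]).
 assert (Ee : Rabs k1 * (eps / k) + Rabs k2 * (eps / k) + eps / k = eps)
   by (unfold k in *; field; lra).
 assert (0 < eps / k) by (apply Rdiv_lt_0_compat; lra).
 lra.
Qed.

Lemma cint_impr (g : R -> Cx) (L : Cx) :
  cint g L <-> impr (fun x => fst (g x)) (fst L) /\ impr (fun x => snd (g x)) (snd L).
Proof. unfold cint; rewrite !impr_iff; tauto. Qed.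

Lemma cint_unique (g : R -> Cx) (L1 L2 : Cx) : cint g L1 -> cint g L2 -> L1 = L2.
Proof.
 rewrite !cint_impr; intros [A1 B1] [A2 B2].
 apply injective_projections; eapply impr_unique; eauto.
Qed.

Lemma cint_val_eq (g : R -> Cx) (L : Cx) : cint g L -> cint_val g = L.
Proof.
 intros H; unfold cint_val.
 destruct (excluded_middle_informative (exists L, cint g L)) as [E|E].
 - destruct (constructive_indefinite_description _ E) as [L' HL']; simpl.
   eapply cint_unique; eauto.
 - exfalso; apply E; eauto.
Qed.

Lemma cint_ext (g h : R -> Cx) (L : Cx) :
  (forall x, 0 < x -> g x = h x) -> cint g L -> cint h L.
Proof.
 rewrite !cint_impr; intros E [A B]; split; eapply impr_ext; eauto;
 intros x Hx; cbv beta; rewrite E; auto.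
Qed.

Lemma cint_scale (g : R -> Cx) (K L : Cx) :
  cint g L -> cint (fun x => Cxmul K (g x)) (Cxmul K L).
Proof.
 rewrite !cint_impr; intros [A B]; destruct K as [k1 k2]; simpl; split.
 - apply (impr_ext (fun x => k1 * fst (g x) + (- k2) * snd (g x))); [intros; ring|].
   replace (k1 * fst L - k2 * snd L) with (k1 * fst L + (- k2) * snd L) by ring.
   apply impr_lin; auto.
 - apply (impr_ext (fun x => k1 * snd (g x) + k2 * fst (g x))); [intros; ring|].
   apply impr_lin; auto.
Qed.

Lemma exp_le_compat (x y : R) : x <= y -> exp x <= exp y.
Proof. intros [H|H]; [left; apply exp_increasing; auto | subst; lra]. Qed.

Lemma pow_small_near_0 (K p eps : R) : 0 < p -> 0 < eps ->
  exists d, 0 < d <= 1 /\ forall y, 0 < y -> y <= d -> K * exp (p * ln y) < eps.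
Proof.
 intros Hp He.
 destruct (Rle_dec K 0) as [HK|HK].
 - exists 1; split; [lra|]; intros y _ _; pose proof (exp_pos (p * ln y)); nra.
 - set (t := ln (eps / (2 * K)) / p).
   exists (Rmin 1 (exp t)); split.
   + split; [apply Rmin_glb_lt; [lra|apply exp_pos]|apply Rmin_l].
   + intros y Hy Hyd.
     assert (Hl : ln y <= t).
     { rewrite <- (ln_exp t); apply ln_le; auto; pose proof (Rmin_r 1 (exp t)); lra. }
     assert (Hpl : p * ln y <= ln (eps / (2 * K))).
     { apply (Rmult_le_compat_l p) in Hl; [|lra]; unfold t in Hl.
       replace (p * (ln (eps / (2 * K)) / p)) with (ln (eps / (2 * K))) in Hl by (field; lra).
       exact Hl. }
     apply exp_le_compat in Hpl; rewrite exp_ln in Hpl by (apply Rdiv_lt_0_compat; lra).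
     apply (Rmult_le_compat_l K) in Hpl; [|lra].
     replace (K * (eps / (2 * K))) with (eps / 2) in Hpl by (field; lra); lra.
Qed.

Lemma inv_succ_bounds (n : nat) : 0 < / (INR n + 1) <= 1.
Proof.
 pose proof (pos_INR n); split; [apply Rinv_0_lt_compat; lra|].
 rewrite <- Rinv_1; apply Rinv_le_contravar; lra.
Qed.

Lemma inv_succ_decr (n m : nat) : (n <= m)%nat -> / (INR m + 1) <= / (INR n + 1).
Proof. intros H; apply le_INR in H; pose proof (pos_INR n); apply Rinv_le_contravar; lra. Qed.

Lemma inv_succ_small (d : R) : 0 < d -> exists N, forall n, (N <= n)%nat -> / (INR n + 1) < d.
Proof.
 intros Hd; destruct (archimed_cor1 d Hd) as [N [HN HN0]].
 exists N; intros n Hn; apply lt_INR in HN0; apply le_INR in Hn; simpl in HN0.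
 eapply Rle_lt_trans; [|exact HN]; apply Rinv_le_contravar; lra.
Qed.

Lemma limit_at_0_of_cauchy (G : R -> R) (K p : R) : 0 < p ->
  (forall x y, 0 < x -> x <= y -> y <= 1 -> Rabs (G x - G y) <= K * exp (p * ln y)) ->
  exists L, forall y, 0 < y -> y <= 1 -> Rabs (G y - L) <= K * exp (p * ln y).
Proof.
 intros Hp HG.
 set (u := fun n : nat => G (/ (INR n + 1))).
 assert (Hu : forall n m, (n <= m)%nat ->
   Rabs (u m - u n) <= K * exp (p * ln (/ (INR n + 1)))).
 { intros n m Hnm; unfold u; pose proof (inv_succ_bounds n); pose proof (inv_succ_bounds m).
   apply HG; try lra; apply inv_succ_decr; auto. }
 assert (Hc : Cauchy_crit u).
 { intros eps He; destruct (pow_small_near_0 K p eps Hp He) as [d [Hd Hsm]].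
   destruct (inv_succ_small d ltac:(lra)) as [N HN].
   exists N; intros n m Hn Hm; unfold R_dist.
   destruct (Nat.le_ge_cases n m) as [Hnm|Hnm].
   - rewrite Rabs_minus_sym; eapply Rle_lt_trans; [apply Hu; auto|].
     apply Hsm; [apply inv_succ_bounds | left; apply HN; auto].
   - eapply Rle_lt_trans; [apply Hu; auto|].
     apply Hsm; [apply inv_succ_bounds | left; apply HN; auto]. }
 destruct (Rcomplete.R_complete u Hc) as [L HL].
 exists L; intros y Hy Hy1.
 apply Rnot_lt_le; intro Hlt.
 set (de := Rabs (G y - L) - K * exp (p * ln y)).
 destruct (HL de ltac:(unfold de; lra)) as [N1 HN1].
 destruct (inv_succ_small y Hy) as [N2 HN2].
 set (n := max N1 N2).
 specialize (HN1 n (Nat.le_max_l _ _)); specialize (HN2 n (Nat.le_max_r _ _)).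
 unfold R_dist, u in HN1.
 assert (Hb := HG (/ (INR n + 1)) y ltac:(apply inv_succ_bounds) ltac:(lra) Hy1).
 revert HN1 Hb; unfold de; generalize (G (/ (INR n + 1))) (K * exp (p * ln y)).
 intros v k H1 H2; clear -H1 H2; split_Rabs; lra.
Qed.

Lemma RInt_abs_le_primitive (g h F : R -> R) (a b : R) : a <= b -> ex_RInt g a b ->
  (forall x, a <= x <= b -> is_derive F x (h x)) ->
  (forall x, a <= x <= b -> continuous h x) ->
  (forall x, a < x < b -> Rabs (g x) <= h x) -> Rabs (RInt g a b) <= F b - F a.
Proof.
 intros Hab Hg HD HC Hb.
 assert (Hh : is_RInt h a b (minus (F b) (F a))).
 { apply (is_RInt_derive (V:=R_CompleteNormedModule)); intros x Hx;
   rewrite Rmin_left, Rmax_right in Hx by lra; auto. }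
 assert (Exh : ex_RInt h a b) by (eexists; exact Hh).
 assert (Eh : RInt h a b = F b - F a)
   by (rewrite (is_RInt_unique (V:=R_CompleteNormedModule) _ _ _ _ Hh); reflexivity).
 assert (U : RInt g a b <= RInt h a b).
 { apply RInt_le; auto; intros x Hx; specialize (Hb x Hx); pose proof (Rle_abs (g x)); lra. }
 assert (L : RInt (fun x => - h x) a b <= RInt g a b).
 { apply RInt_le; auto.
   - exact (ex_RInt_opp (V:=R_NormedModule) h a b Exh).
   - intros x Hx; specialize (Hb x Hx); pose proof (Rle_abs (- g x)); rewrite Rabs_Ropp in H; lra. }
 assert (Eo : RInt (fun x => - h x) a b = - RInt h a b)
   by exact (RInt_opp (V:=R_CompleteNormedModule) h a b Exh).
 rewrite Eo, Eh in L; rewrite Eh in U; revert L U; generalize (RInt g a b); intros I L U.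
 clear -L U; split_Rabs; lra.
Qed.

Section ConvergenceCriterion.

Variable g : R -> R.
Variables C a : R.
Hypothesis Ha : 0 < a < 1.
Hypothesis Hcont : forall x, 0 < x -> continuous g x.
Hypothesis Hnear0 : forall x, 0 < x -> x <= 1 -> Rabs (g x) <= C * exp (- a * ln x).
Hypothesis Hnearinf : forall x, 1 <= x -> Rabs (g x) <= C * exp (- (1 + a) * ln x).

(* The bound at x = 1 forces C >= 0. *)
Lemma C_nonneg : 0 <= C.
Proof.
 specialize (Hnear0 1 Rlt_0_1 (Rle_refl 1)); pose proof (Rabs_pos (g 1)).
 pose proof (exp_pos (- a * ln 1)); nra.
Qed.

Lemma ex_RInt_pos (x y : R) : 0 < x -> x <= y -> ex_RInt g x y.
Proof.
 intros Hx Hxy; apply (ex_RInt_continuous (V:=R_CompleteNormedModule)).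
 intros t Ht; rewrite Rmin_left, Rmax_right in Ht by lra; apply Hcont; lra.
Qed.

Lemma RInt_split (x y t : R) : 0 < x -> x <= y -> y <= t ->
  RInt g x t = RInt g x y + RInt g y t.
Proof.
 intros Hx Hxy Hyt; symmetry.
 apply (RInt_Chasles (V:=R_CompleteNormedModule)); apply ex_RInt_pos; lra.
Qed.

Lemma tail_at_0 : exists L0, forall y, 0 < y -> y <= 1 ->
  Rabs (RInt g y 1 - L0) <= C / (1 - a) * exp ((1 - a) * ln y).
Proof.
 pose proof C_nonneg.
 set (F0 := fun t => C * exp ((1 - a) * ln t) / (1 - a)).
 assert (D0 : forall x y, 0 < x -> x <= y -> y <= 1 -> Rabs (RInt g x y) <= F0 y - F0 x).
 { intros x y Hx Hxy Hy.
   apply (RInt_abs_le_primitive g (fun t => C * exp (- a * ln t))); auto.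
   - apply ex_RInt_pos; auto.
   - intros t Ht; unfold F0; auto_derive; [lra|].
     replace ((1 - a) * ln t) with (- a * ln t + ln t) by ring.
     rewrite exp_plus, exp_ln by lra; field; split; lra.
   - intros t Ht; apply (ex_derive_continuous (K:=R_AbsRing) (V:=R_NormedModule)); auto_derive; lra.
   - intros t Ht; apply Hnear0; lra. }
 apply limit_at_0_of_cauchy; [lra|].
 intros x y Hx Hxy Hy.
 rewrite (RInt_split x y 1) by lra.
 replace (RInt g x y + RInt g y 1 - RInt g y 1) with (RInt g x y) by lra.
 eapply Rle_trans; [apply D0; auto|]; unfold F0.
 assert (0 <= C * exp ((1 - a) * ln x) / (1 - a)).
 { apply Rmult_le_pos; [apply Rmult_le_pos; [auto| left; apply exp_pos]|].
   left; apply Rinv_0_lt_compat; lra. }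
 unfold Rdiv in *; lra.
Qed.

Lemma tail_at_inf : exists L1, forall y, 0 < y -> y <= 1 ->
  Rabs (RInt g 1 (/ y) - L1) <= C / a * exp (a * ln y).
Proof.
 pose proof C_nonneg.
 set (F1 := fun t => - (C / a) * exp (- a * ln t)).
 assert (D1 : forall x y, 1 <= x -> x <= y -> Rabs (RInt g x y) <= F1 y - F1 x).
 { intros x y Hx Hxy.
   apply (RInt_abs_le_primitive g (fun t => C * exp (- (1 + a) * ln t))); auto.
   - apply ex_RInt_pos; lra.
   - intros t Ht; unfold F1; auto_derive; [lra|].
     replace (- (1 + a) * ln t) with (- a * ln t + - ln t) by ring.
     rewrite exp_plus, exp_Ropp, exp_ln by lra; field; split; lra.
   - intros t Ht; apply (ex_derive_continuous (K:=R_AbsRing) (V:=R_NormedModule)); auto_derive; lra.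
   - intros t Ht; apply Hnearinf; lra. }
 apply (limit_at_0_of_cauchy (fun u => RInt g 1 (/ u))); [lra|].
 intros x y Hx Hxy Hy.
 assert (H1y : 1 <= / y) by (rewrite <- Rinv_1; apply Rinv_le_contravar; lra).
 assert (Hyx : / y <= / x) by (apply Rinv_le_contravar; lra).
 rewrite (RInt_split 1 (/ y) (/ x)) by lra.
 replace (RInt g 1 (/ y) + RInt g (/ y) (/ x) - RInt g 1 (/ y)) with (RInt g (/ y) (/ x)) by lra.
 eapply Rle_trans; [apply D1; auto|]; unfold F1.
 rewrite (ln_Rinv y) by lra; replace (- a * - ln y) with (a * ln y) by ring.
 assert (0 <= C / a * exp (- a * ln (/ x))).
 { apply Rmult_le_pos; [apply Rmult_le_pos; [auto| left; apply Rinv_0_lt_compat; lra]|].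
   left; apply exp_pos. }
 lra.
Qed.

Lemma impr_criterion : exists l, impr g l.
Proof.
 destruct tail_at_0 as [L0 HL0]; destruct tail_at_inf as [L1 HL1].
 exists (L0 + L1); split; [exact ex_RInt_pos|].
 intros eps He.
 destruct (pow_small_near_0 (C / (1 - a)) (1 - a) (eps / 2)) as [d0 [Hd0 S0]]; [lra|lra|].
 destruct (pow_small_near_0 (C / a) a (eps / 2)) as [d1 [Hd1 S1]]; [lra|lra|].
 assert (Hid1 : 1 <= / d1) by (rewrite <- Rinv_1; apply Rinv_le_contravar; lra).
 exists d0, (/ d1); split; [lra|split; [lra|]].
 intros x y Hx Hxd Hy.
 assert (Hiy : / y < d1).
 { rewrite <- (Rinv_inv d1); apply Rinv_lt_contravar; auto; apply Rmult_lt_0_compat; lra. }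
 assert (Hiyp : 0 < / y) by (apply Rinv_0_lt_compat; lra).
 rewrite (RInt_split x 1 y) by lra.
 specialize (HL0 x Hx ltac:(lra)); specialize (HL1 (/ y) Hiyp ltac:(lra)).
 rewrite Rinv_inv in HL1.
 specialize (S0 x Hx ltac:(lra)); specialize (S1 (/ y) Hiyp ltac:(lra)).
 revert HL0 HL1 S0 S1.
 generalize (RInt g x 1) (RInt g 1 y) (C / (1 - a) * exp ((1 - a) * ln x))
   (C / a * exp (a * ln (/ y))); intros I0 I1 e0 e1 H0 H1 H2 H3.
 clear -H0 H1 H2 H3; split_Rabs; lra.
Qed.

End ConvergenceCriterion.

Lemma continuous_of_continue_in (f : R -> R) :
  (forall x, 0 <= x -> continue_in f (fun y => 0 <= y) x) ->
  forall x, 0 < x -> continuous f x.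
Proof.
 intros Hcont x Hx; apply continuity_pt_filterlim.
 specialize (Hcont x (Rlt_le _ _ Hx)).
 unfold continuity_pt, continue_in, limit1_in, limit_in in *.
 intros eps He; destruct (Hcont eps He) as [al [Hal H]].
 exists (Rmin al x); split; [apply Rmin_glb_lt; auto|].
 intros y [[_ Hneq] Hd]; apply H; simpl in *; unfold R_dist in *.
 pose proof (Rmin_l al x); pose proof (Rmin_r al x).
 split; [split; [|auto]|lra].
 clear -Hd H0 H1 Hx; split_Rabs; lra.
Qed.

Lemma bounded_on_segment (f : R -> R) (b : R) :
  (forall x, 0 <= x -> continue_in f (fun y => 0 <= y) x) -> 0 <= b ->
  exists B, 0 <= B /\ forall x, 0 <= x -> x <= b -> Rabs (f x) <= B.
Proof.
 intros Hcont Hb.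
 (* extend evenly to R so that the compact-interval maximum theorem applies *)
 assert (Hc : forall x0, 0 <= x0 <= b -> continuity_pt (fun x => Rabs (f (Rabs x))) x0).
 { intros x0 Hx0; apply (continuity_pt_comp (fun x => f (Rabs x)) Rabs); [|apply Rcontinuity_abs].
   specialize (Hcont x0 (proj1 Hx0)).
   unfold continuity_pt, continue_in, limit1_in, limit_in in *.
   intros eps He; destruct (Hcont eps He) as [al [Hal H]].
   exists al; split; auto; intros y [_ Hd]; simpl in *; unfold R_dist in *.
   rewrite (Rabs_pos_eq x0) by lra.
   destruct (Req_dec (Rabs y) x0) as [E|E].
   - rewrite E; unfold Rminus; rewrite Rplus_opp_r, Rabs_R0; auto.
   - apply H; split; [split; [apply Rabs_pos|auto]|].
     pose proof (Rabs_triang_inv2 y x0); rewrite (Rabs_pos_eq x0) in H0 by lra; lra. }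
 destruct (continuity_ab_maj (fun x => Rabs (f (Rabs x))) 0 b Hb Hc) as [xm [Hxm _]].
 exists (Rabs (f (Rabs xm))); split; [apply Rabs_pos|].
 intros x H0 H1; specialize (Hxm x (conj H0 H1)); simpl in Hxm.
 rewrite (Rabs_pos_eq x H0) in Hxm; exact Hxm.
Qed.

Lemma decay_of_asymptotics (f : R -> R) (c eps K x : R) : 0 < eps -> 1 <= x ->
  Rabs (f x - c / x) <= K * Rpower x (- 1 - eps) -> Rabs (f x) * x <= Rabs c + Rabs K.
Proof.
 intros Heps Hx Has; unfold Rpower in Has.
 assert (Hln : 0 <= ln x) by (rewrite <- ln_1; apply ln_le; lra).
 assert (Hp : exp ((-1 - eps) * ln x) <= / x).
 { rewrite <- (exp_ln x) at 2 by lra; rewrite <- exp_Ropp; apply exp_le_compat; nra. }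
 assert (HK : Rabs (f x - c / x) * x <= Rabs K).
 { pose proof (exp_pos ((-1 - eps) * ln x)); pose proof (Rle_abs K).
   apply Rle_trans with (Rabs K * / x * x); [apply Rmult_le_compat_r; [lra|]|right; field; lra].
   apply Rle_trans with (Rabs K * exp ((-1 - eps) * ln x)); [nra|].
   apply Rmult_le_compat_l; [apply Rabs_pos | auto]. }
 replace (Rabs (f x) * x) with (Rabs ((f x - c / x) * x + c)).
 2: { replace ((f x - c / x) * x + c) with (f x * x) by (field; lra).
      rewrite Rabs_mult, (Rabs_pos_eq x) by lra; reflexivity. }
 eapply Rle_trans; [apply Rabs_triang|]; rewrite Rabs_mult, (Rabs_pos_eq x) by lra; lra.
Qed.

Lemma f_bounds (f : R -> R) (c eps : R) :
  (forall x, 0 <= x -> continue_in f (fun y => 0 <= y) x) -> 0 < eps ->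
  (exists K M, 0 < M /\
     forall zeta, M <= zeta -> Rabs (f zeta - c / zeta) <= K * Rpower zeta (- 1 - eps)) ->
  exists B C, (forall x, 0 < x -> x <= 1 -> Rabs (f x) <= B) /\
              (forall x, 1 <= x -> Rabs (f x) <= C / x).
Proof.
 intros Hcont Heps [K [M [HM Has]]].
 pose proof (Rmax_l 1 M); pose proof (Rmax_r 1 M); set (b := Rmax 1 M) in *.
 destruct (bounded_on_segment f b Hcont ltac:(lra)) as [B [HB0 HB]].
 exists B, (Rabs c + Rabs K + B * b); split; [intros x Hx Hx1; apply HB; lra|].
 intros x Hx; apply (Rmult_le_reg_r x); [lra|].
 replace ((Rabs c + Rabs K + B * b) / x * x) with (Rabs c + Rabs K + B * b) by (field; lra).
 pose proof (Rabs_pos c); pose proof (Rabs_pos K); assert (0 <= B * b) by (apply Rmult_le_pos; lra).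
 destruct (Rle_dec x b) as [Hle|Hgt].
 - assert (Rabs (f x) * x <= B * b) by (apply Rmult_le_compat; [apply Rabs_pos|lra|apply HB; lra|lra]). lra.
 - assert (Rabs (f x) * x <= Rabs c + Rabs K) by (apply (decay_of_asymptotics f c eps); [auto|lra|apply Has; lra]).
   lra.
Qed.

Lemma weighted_impr (f th : R -> R) (B C a : R) : 0 < a < 1 ->
  (forall x, 0 < x -> continuous f x) -> (forall x, 0 < x -> continuous th x) ->
  (forall x, Rabs (th x) <= 1) ->
  (forall x, 0 < x -> x <= 1 -> Rabs (f x) <= B) -> (forall x, 1 <= x -> Rabs (f x) <= C / x) ->
  exists l, impr (fun t => f t * (exp (- a * ln t) * th t)) l.
Proof.
 intros Ha Hf Hth Hth1 HB HC.
 assert (Hg : forall x, 0 < x -> Rabs (f x * (exp (- a * ln x) * th x)) <= Rabs (f x) * exp (- a * ln x)).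
 { intros x Hx; rewrite !Rabs_mult, (Rabs_pos_eq (exp _)) by (left; apply exp_pos).
   apply Rmult_le_compat_l; [apply Rabs_pos|].
   rewrite <- (Rmult_1_r (exp _)) at 2; apply Rmult_le_compat_l; [left; apply exp_pos|auto]. }
 apply (impr_criterion _ (Rmax B C) a Ha).
 - intros x Hx.
   apply (continuous_mult (K:=R_AbsRing) f (fun t => exp (- a * ln t) * th t)); [auto|].
   apply (continuous_mult (K:=R_AbsRing) (fun t => exp (- a * ln t)) th); [|auto].
   apply (ex_derive_continuous (K:=R_AbsRing) (V:=R_NormedModule)); auto_derive; lra.
 - intros x Hx Hx1; eapply Rle_trans; [apply Hg; auto|].
   apply Rmult_le_compat_r; [left; apply exp_pos|].
   eapply Rle_trans; [apply HB; auto|apply Rmax_l].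
 - intros x Hx; eapply Rle_trans; [apply Hg; lra|].
   replace (- (1 + a) * ln x) with (- a * ln x + - ln x) by ring.
   rewrite exp_plus, exp_Ropp, exp_ln by lra.
   pose proof (exp_pos (- a * ln x)).
   assert (Rabs (f x) <= Rmax B C / x).
   { eapply Rle_trans; [apply HC; lra|]; unfold Rdiv.
     apply Rmult_le_compat_r; [left; apply Rinv_0_lt_compat; lra|apply Rmax_r]. }
   replace (Rmax B C * (exp (- a * ln x) * / x)) with (Rmax B C / x * exp (- a * ln x))
     by (field; lra).
   apply Rmult_le_compat_r; lra.
Qed.

Lemma mellin_converges (f : R -> R) (B C : R) :
  (forall x, 0 <= x -> continue_in f (fun y => 0 <= y) x) ->
  (forall x, 0 < x -> x <= 1 -> Rabs (f x) <= B) -> (forall x, 1 <= x -> Rabs (f x) <= C / x) ->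
  forall w, 0 < fst w < 1 -> exists L, cint (fun t => Cxmul (RtoCx (f t)) (cpow_neg t w)) L.
Proof.
 intros Hcont HB HC [a b] Ha; simpl in Ha.
 pose proof (continuous_of_continue_in f Hcont) as Hf.
 assert (Htrig : forall th : R -> R, (forall x, continuous th x) -> forall x, 0 < x ->
   continuous (fun t => th (b * ln t)) x).
 { intros th Hth x Hx.
   apply (continuous_comp (fun t => b * ln t) th); [|apply Hth].
   apply (ex_derive_continuous (K:=R_AbsRing) (V:=R_NormedModule)); auto_derive; lra. }
 destruct (weighted_impr f (fun t => cos (b * ln t)) B C a) as [l1 H1]; auto.
 { apply Htrig; intros y; apply continuity_pt_filterlim, continuity_cos. }
 { intros x; pose proof (COS_bound (b * ln x)); split_Rabs; lra. }
 destruct (weighted_impr f (fun t => - sin (b * ln t)) B C a) as [l2 H2]; auto.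
 { apply (Htrig (fun y => - sin y)); intros y.
   apply continuity_pt_filterlim, continuity_opp, continuity_sin. }
 { intros x; pose proof (SIN_bound (b * ln x)); split_Rabs; lra. }
 exists (l1, l2); apply cint_impr; split; simpl.
 - eapply impr_ext; [|exact H1]; intros t _; simpl; ring.
 - eapply impr_ext; [|exact H2]; intros t _; simpl; ring.
Qed.

Lemma cpow_neg_mul (a b : R) (w : Cx) : 0 < a -> 0 < b ->
  cpow_neg (a * b) w = Cxmul (cpow_neg a w) (cpow_neg b w).
Proof.
 intros Ha Hb; unfold cpow_neg, Cxmul; cbn [fst snd]; rewrite ln_mult by auto.
 rewrite Rmult_plus_distr_l, Rmult_plus_distr_l, exp_plus, cos_plus, sin_plus.
 apply injective_projections; cbn [fst snd]; ring.
Qed.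

Lemma cpow_scale_add (t x y : R) (z : Cx) :
  cpow_neg t (Cxscale (x + y) z) = Cxmul (cpow_neg t (Cxscale x z)) (cpow_neg t (Cxscale y z)).
Proof.
 unfold cpow_neg, Cxmul, Cxscale; cbn [fst snd].
 replace (- ((x + y) * fst z) * ln t) with (- (x * fst z) * ln t + - (y * fst z) * ln t) by ring.
 replace ((x + y) * snd z * ln t) with (x * snd z * ln t + y * snd z * ln t) by ring.
 rewrite exp_plus, cos_plus, sin_plus; apply injective_projections; cbn [fst snd]; ring.
Qed.

Lemma cpow_scale_0 (t : R) (z : Cx) : cpow_neg t (Cxscale 0 z) = Cx1.
Proof.
 unfold cpow_neg, Cxscale, Cx1; cbn [fst snd].
 rewrite !Rmult_0_l, Ropp_0, Rmult_0_l, exp_0, cos_0, sin_0.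
 apply injective_projections; cbn [fst snd]; ring.
Qed.

Lemma cpow_scale_1 (t : R) (z : Cx) : cpow_neg t (Cxscale 1 z) = cpow_neg t z.
Proof. unfold cpow_neg, Cxscale; cbn [fst snd]; rewrite !Rmult_1_l; reflexivity. Qed.

Lemma tsize_node (ws : forest) : tsize (Node ws) = S (fsize ws).
Proof. simpl; f_equal; induction ws as [|u ws IH]; simpl; auto. Qed.

Lemma tnodeprod_node (g : nat -> Cx) (ws : forest) :
  tnodeprod g (Node ws) = Cxmul (g (S (fsize ws))) (fnodeprod g ws).
Proof.
 change (tnodeprod g (Node ws)) with (Cxmul (g (tsize (Node ws)))
   ((fix fp (l : list tree) : Cx :=
          match l with nil => Cx1 | u :: l' => Cxmul (tnodeprod g u) (fp l') end) ws)).
 rewrite tsize_node; f_equal; induction ws as [|u ws IH]; simpl; auto; rewrite IH; auto.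
Qed.

Lemma phi_tree_node (f : R -> R) (z : Cx) (ws : forest) (s : R) :
  phi_tree f z (Node ws) s = cint_val (phi_integrand f z ws s).
Proof.
 simpl; unfold phi_integrand; f_equal; apply functional_extensionality; intro t; f_equal.
 unfold phi_forest; generalize (s * t).
 induction ws as [|u ws IH]; intros r; simpl; [reflexivity | rewrite IH; reflexivity].
Qed.

Lemma tsize_le_fsize (t : tree) (w : forest) : In t w -> (tsize t <= fsize w)%nat.
Proof.
 induction w as [|u w IH]; simpl; [tauto|].
 intros [E|H]; [subst; lia | specialize (IH H); lia].
Qed.

Ltac cx_ring :=
  unfold Cxmul, RtoCx, Cx1; apply injective_projections; cbn [fst snd]; ring.

Section ClosedForm.

Variable f : R -> R.
Variable z : Cx.

(* F_n = F(n z), the factor attached to a node v with |w_v| = n. *)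
Definition F_at (n : nat) : Cx := Ftrans f (Cxscale (INR n) z).

Definition tree_closed_form (t : tree) : Prop := forall s, 0 < s ->
  phi_tree f z t s = Cxmul (cpow_neg s (Cxscale (INR (tsize t)) z)) (tnodeprod F_at t).

Definition forest_closed_form (w : forest) : Prop := forall s, 0 < s ->
  phi_forest f z w s = Cxmul (cpow_neg s (Cxscale (INR (fsize w)) z)) (fnodeprod F_at w).

(* Both sides are multiplicative, so the formula passes from trees to forests. *)
Lemma forest_closed_form_of_trees (w : forest) :
  (forall t, In t w -> tree_closed_form t) -> forest_closed_form w.
Proof.
 induction w as [|t w IH]; intros H s Hs.
 - unfold phi_forest, fnodeprod; simpl; rewrite cpow_scale_0; cx_ring.
 - change (phi_forest f z (t :: w) s) with (Cxmul (phi_tree f z t s) (phi_forest f z w s)).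
   change (fnodeprod F_at (t :: w)) with (Cxmul (tnodeprod F_at t) (fnodeprod F_at w)).
   change (fsize (t :: w)) with (tsize t + fsize w)%nat.
   rewrite (H t (or_introl eq_refl) s Hs), (IH (fun u Hu => H u (or_intror Hu)) s Hs).
   rewrite plus_INR, cpow_scale_add; cx_ring.
Qed.

(* If the closed formula holds for w and F_{|w|+1} converges, the integrand of
   phi_s(B_+ w) is a constant multiple of f(t) t^{-(|w|+1) z}, so it converges to
   s^{-(|w|+1) z} (prod_{v in V(w)} F_{|w_v|}) F_{|w|+1}. *)
Lemma integrand_closed_form (w : forest) (s : R) :
  (exists L, cint (fun t => Cxmul (RtoCx (f t)) (cpow_neg t (Cxscale (INR (S (fsize w))) z))) L) ->
  forest_closed_form w -> 0 < s ->
  cint (phi_integrand f z w s)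
    (Cxmul (Cxmul (cpow_neg s (Cxscale (INR (S (fsize w))) z)) (fnodeprod F_at w))
           (F_at (S (fsize w)))).
Proof.
 intros [L HL] Hw Hs.
 replace (F_at (S (fsize w))) with L by (symmetry; apply cint_val_eq; exact HL).
 apply (cint_ext (fun t => Cxmul
     (Cxmul (cpow_neg s (Cxscale (INR (S (fsize w))) z)) (fnodeprod F_at w))
     (Cxmul (RtoCx (f t)) (cpow_neg t (Cxscale (INR (S (fsize w))) z))))).
 - intros t Ht; unfold phi_integrand.
   rewrite (Hw (s * t)) by (apply Rmult_lt_0_compat; auto).
   rewrite S_INR, Rplus_comm, !(cpow_scale_add _ 1), !cpow_scale_1, !(cpow_neg_mul s t) by auto.
   cx_ring.
 - apply cint_scale; auto.
Qed.

Lemma tree_closed_form_small (N : nat) :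
  (forall m, (1 <= m <= N)%nat ->
     exists L, cint (fun t => Cxmul (RtoCx (f t)) (cpow_neg t (Cxscale (INR m) z))) L) ->
  forall t, (tsize t <= N)%nat -> tree_closed_form t.
Proof.
 intros Hex t; remember (tsize t) as n eqn:En; revert t En.
 induction n as [n IHn] using (well_founded_induction Wf_nat.lt_wf); intros [ws] En HN s Hs.
 rewrite tsize_node in En; subst n.
 assert (Hws : forest_closed_form ws).
 { apply forest_closed_form_of_trees; intros u Hu; pose proof (tsize_le_fsize u ws Hu).
   apply (IHn (tsize u)); auto; lia. }
 rewrite phi_tree_node, (cint_val_eq _ _ (integrand_closed_form ws s (Hex (S (fsize ws)) ltac:(lia)) Hws Hs)).
 rewrite tnodeprod_node, tsize_node; cx_ring.
Qed.

End ClosedForm.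

Lemma multiple_in_strip (N m : nat) (z : Cx) : (1 <= m <= N)%nat ->
  0 < fst z < 1 / INR N -> 0 < fst (Cxscale (INR m) z) < 1.
Proof.
 intros Hm [Hz1 Hz2]; unfold Cxscale; cbn [fst].
 assert (HN : 0 < INR N) by (apply lt_0_INR; lia).
 assert (Hm1 : 1 <= INR m) by (apply (le_INR 1); lia).
 assert (HmN : INR m <= INR N) by (apply le_INR; lia).
 assert (E : INR N * fst z < 1).
 { apply (Rmult_lt_compat_l (INR N)) in Hz2; auto.
   replace (INR N * (1 / INR N)) with 1 in Hz2 by (field; lra); exact Hz2. }
 split; nra.
Qed.

Theorem mainTheorem2
  (f : R -> R)
  (Hcont : forall x, 0 <= x -> continue_in f (fun y => 0 <= y) x)
  (c eps : R) (Heps : 0 < eps)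
  (Hasym : exists K M, 0 < M /\
     forall zeta, M <= zeta -> Rabs (f zeta - c / zeta) <= K * Rpower zeta (- 1 - eps))
  (N : nat) (HN : (1 <= N)%nat)
  (z : Cx) (Hz : 0 < fst z /\ fst z < 1 / INR N) :
  (* all the defining integrals converge *)
  (forall (w : forest) (s : R), (S (fsize w) <= N)%nat -> 0 < s ->
     exists L, cint (phi_integrand f z w s) L) /\
  (* and the closed formula holds *)
  (forall (w : forest) (s : R), (fsize w <= N)%nat -> 0 < s ->
     phi_forest f z w s =
     Cxmul (cpow_neg s (Cxscale (INR (fsize w)) z))
           (fnodeprod (fun n => Ftrans f (Cxscale (INR n) z)) w)).
Proof.
 destruct (f_bounds f c eps Hcont Heps Hasym) as [B [C [HB HC]]].
 assert (Hmellin : forall m, (1 <= m <= N)%nat ->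
     exists L, cint (fun t => Cxmul (RtoCx (f t)) (cpow_neg t (Cxscale (INR m) z))) L).
 { intros m Hm; apply (mellin_converges f B C Hcont HB HC), (multiple_in_strip N); auto. }
 assert (Hforest : forall w, (fsize w <= N)%nat -> forest_closed_form f z w).
 { intros w Hw; apply forest_closed_form_of_trees; intros t Ht.
   pose proof (tsize_le_fsize t w Ht).
   apply (tree_closed_form_small f z N Hmellin); lia. }
 split.
 - intros w s Hw Hs; eexists.
   apply integrand_closed_form; [apply Hmellin; lia | apply Hforest; lia | exact Hs].
 - intros w s Hw Hs; exact (Hforest w Hw s Hs).
Qed.
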